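(* Let $\Lambda$ be a lattice of rank $s$ with basis $\mathcal V=(v_1,\ldots,v_s)$, $\bar a=(a_1,\ldots,a_t)\in(\mathcal F^0(\Lambda,\bar K))^t$, and $\bar n=(n_1,\ldots,n_s)$ with each $n_i$ a positive integer coprime to $p$. Let $G=\Lambda/\Lambda_{\bar n,\mathcal V}$, $\bar a_*$ the pushforward, and let $q_0=p^{r_0}$ ($r_0>0$) be minimal such that $\widehat{(a_j)_*}(G^\vee)\subseteq\mathrm{GF}(q_0)$ for all $j=1,\ldots,t$. (a) The following are equivalent: (i) there exists a nonzero $\Lambda_{\bar n,\mathcal V}$-periodic $\bar a$-harmonic function $\Lambda\to\bar K$; (ii) $V(\bar a_* )\ne\emptyset$; (iii) the system $\sigma_{a_j,\mathcal V}(x_1,\ldots,x_s)=0$ ($j=1,\ldots,t$), $x_i^{n_i}=1$ ($i=1,\ldots,s$) has a solution $\xi\in(\bar K^\times)^s$. (b) $\ker(\Delta_{\bar a_*})\subseteq(\mathcal F(G,\bar K),* )$ coincides with the principal convolution ideal generated by the convolution product $\prod_{j=1}^t\big(\delta_0-\Delta_{(a_j)_*}^{q_0-1}(\delta_0)\big)$, and the operator $\prod_{j=1}^t\big(1_G-\Delta_{(a_j)_*}^{q_0-1}\big)$ is the orthogonal projection of $\mathcal F(G,\bar K)$ onto $\ker(\Delta_{\bar a_*})$. (c) If $t=1$ and $a_1=a$, then (i)–(iii) are equivalent to each of: (iv) $\Delta_{a_*}^{q_0-1}(\delta_0)\ne\delta_0$, equivalently $\Delta_{a_*}^{q_0-1}\ne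 1_G$; (v) the sequence $\big(\Delta_{a_*}^k(\delta_0)\big)_{k\ge0}$ in $\mathcal F(G,\bar K)$ is not periodic.
   Context: $K=\mathrm{GF}(p)$, $\bar K$ an algebraic closure. For an abelian group $G$, $\mathcal F(G,\bar K)$, $\mathcal F^0(G,\bar K)$ denote all, resp. finitely supported, functions $G\to\bar K$; $(f*a)(g)=\sum_hf(h)a(g-h)$, $\Delta_af=f*a$, $\Delta_{\bar a}$ has kernel $\bigcap_j\ker\Delta_{a_j}$; $f$ is $\bar a$-harmonic if $f*a_j=0$ for all $j$. $\delta_0$ is the delta function at $0$, $1_G$ the identity operator. $\Lambda_{\bar n,\mathcal V}=\sum_in_i\mathbb Zv_i$; a function is $\Lambda_{\bar n,\mathcal V}$-periodic if invariant under translations by $\Lambda_{\bar n,\mathcal V}$. With $\pi:\Lambda\to G$ the projection, $(a_j)_*(c)=\sum_{v\in\pi^{-1}(c)}a_j(v)$ and $\bar a_*=((a_j)_* )_j$. $G^\vee$ is the group of homomorphisms $G\to\bar K^\times$, $\hat b(g^\vee)=\sum_{g\in G}b(g)g^\vee(g)$, $V(\bar a_* )=\{g^\vee:\widehat{(a_j)_*}(g^\vee)=0\ \forall j\}$. The symbol is $\sigma_{a,\mathcal V}=\sum_{v=\sum\alpha_iv_i}a(v)x_1^{-\alpha_1}\cdots x_s^{-\alpha_s}$. Orthogonality is with respect to $\langle f_1,f_2\rangle_1=\frac1{|G|}\sum_{g\in G}f_1(g)f_2(-g)$. The principal convolution ideal generated by $f$ is $\{f*c:c\in\mathcal F(G,\bar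 K)\}$. *)

From HB Require Import structures.
From mathcomp Require Import all_boot all_order all_algebra.
From mathcomp Require Import finmap.
Set Implicit Arguments.
Unset Strict Implicit.
Unset Printing Implicit Defensive.
Import Order.TTheory GRing.Theory.
Local Open Scope ring_scope.

(* The lattice Lambda of rank s, written in coordinates w.r.t. its basis
   V = (v_1,...,v_s): Lambda = Z^s, v_i = i-th standard basis row vector. *)
Notation lat s := 'rV[int]_s.

Notation finfunL s F := {fsfun lat s -> F with 0}.

Section Defs.
Variables (F : fieldType) (s : nat).

(* convolution on Lambda: (f * a)(g) = sum_h f(h) a(g - h)
   = sum_{k in supp a} f(g - k) a(k)   (a finitely supported) *)
Definition convL (f : lat s -> F) (a : finfunL s F) : lat s -> F :=
  fun g => \sum_(k <- finsupp a) f (g - k) * a k.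

Definition harmonic (t : nat) (a : 'I_t -> finfunL s F) (f : lat s -> F) :=
  forall j g, convL f (a j) g = 0.

(* membership in Lambda_{n,V} = sum_i n_i Z v_i *)
Definition inLn (n : 'I_s -> nat) (w : lat s) : bool :=
  [forall i, ((n i)%:Z %| w ord0 i)%Z].

(* Lambda_{n,V}-periodic functions on Lambda; these are identified with the
   functions on G = Lambda / Lambda_{n,V}. *)
Definition periodic (n : 'I_s -> nat) (f : lat s -> F) :=
  forall v w, inLn n w -> f (v + w) = f v.

(* a set of representatives of G = Lambda / Lambda_{n,V}: the box
   { sum_i alpha_i v_i : 0 <= alpha_i < n_i } *)
Definition boxT (n : 'I_s -> nat) := {dffun forall i : 'I_s, 'I_(n i)}.
Definition boxv (n : 'I_s -> nat) (al : boxT n) : lat s :=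
  \row_i ((al i : nat)%:Z).

Definition convG (n : 'I_s -> nat) (f b : lat s -> F) : lat s -> F :=
  fun g => \sum_(al : boxT n) f (boxv al) * b (g - boxv al).

Definition DeltaG (n : 'I_s -> nat) (b : lat s -> F) (f : lat s -> F) :=
  convG n f b.

Definition deltaG (n : 'I_s -> nat) : lat s -> F :=
  fun g => if inLn n g then 1 else 0.

(* push-forward a_star(c) = sum_{v in pi^{-1}(c)} a(v) *)
Definition push (n : 'I_s -> nat) (a : finfunL s F) : lat s -> F :=
  fun c => \sum_(v <- finsupp a | inLn n (v - c)) a v.

(* elements of G^vee: homomorphisms G -> F^x, as periodic multiplicative
   nowhere-zero functions on Lambda *)
Definition is_dual_char (n : 'I_s -> nat) (chi : lat s -> F) :=
  [/\ periodic n chi,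
      forall v w, chi (v + w) = chi v * chi w
    & forall v, chi v != 0].

Definition hatG (n : 'I_s -> nat) (b : lat s -> F) (chi : lat s -> F) : F :=
  \sum_(al : boxT n) b (boxv al) * chi (boxv al).

Definition V_nonempty (n : 'I_s -> nat) (t : nat) (a : 'I_t -> finfunL s F) :=
  exists chi, is_dual_char n chi /\ forall j, hatG n (push n (a j)) chi = 0.

Definition symbol_eval (a : finfunL s F) (xi : 'I_s -> F) : F :=
  \sum_(v <- finsupp a) a v * \prod_(i < s) (xi i) ^ (- v ord0 i).

Definition ipG (n : 'I_s -> nat) (f1 f2 : lat s -> F) : F :=
  (#|{: boxT n}|%:R)^-1 * \sum_(al : boxT n) f1 (boxv al) * f2 (- boxv al).

Definition orth_proj (n : 'I_s -> nat) (W : (lat s -> F) -> Prop)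
    (P : (lat s -> F) -> (lat s -> F)) :=
  [/\ forall f, periodic n f -> periodic n (P f) /\ W (P f),
      forall w, periodic n w -> W w -> P w = w
    & forall f w, periodic n f -> periodic n w -> W w ->
        ipG n (fun g => f g - P f g) w = 0].

End Defs.

From HB Require Import structures.
From mathcomp Require Import all_boot all_order all_algebra.
From mathcomp Require Import finmap.
From mathcomp Require Import cyclic separable cyclotomic.
From mathcomp Require Import ring zify.
From Stdlib Require Import FunctionalExtensionality Classical.
Set Implicit Arguments.
Unset Strict Implicit.
Unset Printing Implicit Defensive.
Import Order.TTheory GRing.Theory Num.Theory.
Local Open Scope ring_scope.

(* Since p does not divide |G| = n_1 ... n_s, the field has primitive n_i-th
   roots of unity zeta_i, and u |-> (v |-> prod_i zeta_i^(u_i v_i)) identifies G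
   with its dual; the Fourier transform on G is then injective and turns
   convolution into pointwise product.  Every value x of the transforms of the
   a_j_* satisfies x^q0 = x, so x^(q0-1) is the indicator of x != 0.  Hence the
   transform of prod_j (delta_0 - Delta_j^(q0-1) delta_0), which is also the
   multiplier of the operator prod_j (1 - Delta_j^(q0-1)), is the indicator of
   the common zero set of these transforms, and (a)-(c) become pointwise
   identities for this idempotent. *)

Section Lattice.
Variables (F : fieldType) (s : nat) (n : 'I_s -> nat).
Hypothesis n_gt0 : forall i, (0 < n i)%N.
Local Notation bv := (@boxv s n).

Lemma inLnP (w : lat s) : reflect (forall i, ((n i)%:Z %| w ord0 i)%Z) (inLn n w).
Proof. exact: forallP. Qed.

Lemma inLnD x y : inLn n x -> inLn n y -> inLn n (x + y).
Proof. by move=> /inLnP hx /inLnP hy; apply/inLnP => i; rewrite mxE rpredD. Qed.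

Lemma inLnN x : inLn n (- x) = inLn n x.
Proof. by apply/inLnP/inLnP => h i; move: (h i); rewrite mxE rpredN. Qed.

Lemma inLnB x y : inLn n x -> inLn n y -> inLn n (x - y).
Proof. by move=> hx hy; apply: inLnD; rewrite ?inLnN. Qed.

Lemma inLn_subC x y : inLn n (x - y) = inLn n (y - x).
Proof. by rewrite -inLnN opprB. Qed.

Lemma inLnDr x w : inLn n w -> inLn n (x + w) = inLn n x.
Proof.
move=> hw; apply/idP/idP => [h|h]; last exact: inLnD.
by have := inLnB h hw; rewrite addrK.
Qed.

Lemma periodic_eq (f : lat s -> F) u v : periodic n f -> inLn n (v - u) -> f v = f u.
Proof. by move=> hf h; rewrite -(hf u (v - u) h) addrC subrK. Qed.

Lemma box_rep_subproof (v : lat s) i : (absz (v ord0 i %% (n i)%:Z)%Z < n i)%N.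
Proof.
have n0 : (n i)%:Z != 0 by rewrite eqz_nat -lt0n n_gt0.
by rewrite -ltz_nat gez0_abs ?modz_ge0 // ltz_pmod // ltz_nat n_gt0.
Qed.

Definition box_rep (v : lat s) : boxT n := [ffun i => Ordinal (box_rep_subproof v i)].

Lemma inLn_sub_box_rep v : inLn n (v - bv (box_rep v)).
Proof.
apply/inLnP => i; rewrite !mxE ffunE /=.
have n0 : (n i)%:Z != 0 by rewrite eqz_nat -lt0n n_gt0.
rewrite gez0_abs ?modz_ge0 //.
by rewrite {1}(divz_eq (v ord0 i) (n i)) addrK dvdz_mull.
Qed.

Lemma boxv_inLn_inj al be : inLn n (bv al - bv be) -> al = be.
Proof.
move=> /inLnP h; apply/ffunP => i; apply/val_inj; move: (h i).
by rewrite !mxE -eqz_mod_dvd !modz_small ?ltz_nat ?ltn_ord // => /eqP [].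
Qed.

Lemma eq_box_rep x y : (box_rep x == box_rep y) = inLn n (x - y).
Proof.
apply/eqP/idP => [e|h].
  have := inLnB (inLn_sub_box_rep x) (inLn_sub_box_rep y).
  by rewrite e opprB addrA subrK.
apply: boxv_inLn_inj.
have := inLnD (inLnB (inLn_sub_box_rep y) (inLn_sub_box_rep x)) h.
suff -> : y - bv (box_rep y) - (x - bv (box_rep x)) + (x - y)
          = bv (box_rep x) - bv (box_rep y) by [].
by apply/matrixP => i j; rewrite !mxE; ring.
Qed.

Lemma box_rep_boxv al : box_rep (bv al) = al.
Proof. by apply: boxv_inLn_inj; rewrite inLn_subC inLn_sub_box_rep. Qed.

Lemma periodic_box_rep (f : lat s -> F) u : periodic n f -> f (bv (box_rep u)) = f u.
Proof. by move=> hf; apply: periodic_eq; rewrite // inLn_subC inLn_sub_box_rep. Qed.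

Lemma sum_box_inLn (f : lat s -> F) w : periodic n f ->
  \sum_(al : boxT n) (if inLn n (w - bv al) then f (bv al) else 0) = f w.
Proof.
move=> hf; rewrite -big_mkcond /= (eq_bigl (pred1 (box_rep w))).
  by rewrite big_pred1_eq periodic_box_rep.
by move=> al /=; rewrite -eq_box_rep box_rep_boxv eq_sym.
Qed.

Lemma sum_box_shift (f : lat s -> F) w : periodic n f ->
  \sum_(al : boxT n) f (bv al - w) = \sum_(al : boxT n) f (bv al).
Proof.
move=> hf.
have shift_inj : injective (fun al => box_rep (bv al - w)).
  move=> x y /eqP; rewrite eq_box_rep opprB addrA subrK.
  exact: boxv_inLn_inj.
rewrite [RHS](reindex_inj shift_inj); apply: eq_bigr => al _.
by rewrite periodic_box_rep.
Qed.

Lemma card_box_neq0 p : prime p -> p \in [pchar F] -> (forall i, coprime (n i) p) ->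
  (#|{: boxT n}|%:R : F) != 0.
Proof.
move=> p_pr pF n_cop.
rewrite card_dep_ffun -(dvdn_pcharf pF) -prime_coprime // coprime_sym /image_mem.
elim: (enum _) => [|x l IH] /=; first exact: coprime1n.
by rewrite coprimeMl card_ord n_cop IH.
Qed.

Lemma periodic_convG (f b : lat s -> F) : periodic n b -> periodic n (convG n f b).
Proof.
move=> hb v w hw; apply: eq_bigr => al _.
by rewrite -(hb (v - bv al) w hw) addrAC.
Qed.

Lemma periodic_deltaG : periodic n (deltaG F n).
Proof. by move=> v w hw; rewrite /deltaG inLnDr. Qed.

Lemma periodic_push (a : finfunL s F) : periodic n (push n a).
Proof.
move=> v w hw; apply: eq_bigl => u.
by rewrite opprD addrA (inLnDr (u - v)) // inLnN.
Qed.

Lemma periodicB (f g : lat s -> F) : periodic n f -> periodic n g ->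
  periodic n (fun x => f x - g x).
Proof. by move=> hf hg v w hw; rewrite hf // hg. Qed.

Lemma periodicM (f g : lat s -> F) : periodic n f -> periodic n g ->
  periodic n (fun x => f x * g x).
Proof. by move=> hf hg v w hw; rewrite hf // hg. Qed.

Lemma periodic_cst (c : F) : periodic n (fun=> c).
Proof. by []. Qed.

Lemma periodic_iter_DeltaG k (f b : lat s -> F) : periodic n b -> periodic n f ->
  periodic n (iter k (DeltaG n b) f).
Proof. by move=> hb hf; case: k => [|k] //=; apply: periodic_convG. Qed.

Lemma convL_push (f : lat s -> F) (a : finfunL s F) g : periodic n f ->
  convL f a g = convG n f (push n a) g.
Proof.
move=> hf; rewrite /convL /convG /push.
under [RHS]eq_bigr do rewrite big_distrr big_mkcond /=.
rewrite exchange_big /=; apply: eq_bigr => v _.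
rewrite -(sum_box_inLn (g - v) (periodicM hf (periodic_cst (a v)))).
apply: eq_bigr => al _.
have -> : v - (g - bv al) = - (g - v - bv al) by apply/matrixP => i j; rewrite !mxE; ring.
by rewrite inLnN; case: ifP.
Qed.

Lemma hatG_push (a : finfunL s F) (chi : lat s -> F) : periodic n chi ->
  hatG n (push n a) chi = \sum_(v <- finsupp a) a v * chi v.
Proof.
move=> hchi; rewrite /hatG /push.
under eq_bigr do rewrite big_distrl big_mkcond /=.
rewrite exchange_big /=; apply: eq_bigr => v _.
rewrite -(sum_box_inLn v (periodicM (periodic_cst (a v)) hchi)).
by apply: eq_bigr => al _; case: ifP.
Qed.

End Lattice.

Section Characters.
Variables (F : fieldType) (s : nat) (n : 'I_s -> nat).
Hypothesis n_gt0 : forall i, (0 < n i)%N.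

Definition monomial (xi : 'I_s -> F) (v : lat s) : F := \prod_i xi i ^ (v ord0 i).

Section Monomial.
Variable xi : 'I_s -> F.
Hypothesis xi_neq0 : forall i, xi i != 0.

Lemma monomialD u v : monomial xi (u + v) = monomial xi u * monomial xi v.
Proof. by rewrite -big_split; apply: eq_bigr => i _; rewrite mxE expfzDr. Qed.

Lemma monomial0 : monomial xi 0 = 1.
Proof. by rewrite /monomial big1 // => i _; rewrite mxE expr0z. Qed.

Lemma monomial_neq0 v : monomial xi v != 0.
Proof.
rewrite prodf_seq_neq0; apply/allP => i _.
by rewrite expfz_eq0 negb_and xi_neq0 orbT.
Qed.

Lemma periodic_monomial : (forall i, xi i ^+ n i = 1) -> periodic n (monomial xi).
Proof.
move=> xi_n v w /inLnP hw; rewrite monomialD [X in _ * X]big1 ?mulr1 // => i _.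
by have /dvdzP [z ->] := hw i; rewrite mulrC -exprz_exp -exprnP xi_n exp1rz.
Qed.

Lemma dual_char_monomial : (forall i, xi i ^+ n i = 1) -> is_dual_char n (monomial xi).
Proof. by split; [exact: periodic_monomial | exact: monomialD | exact: monomial_neq0]. Qed.

End Monomial.

Section DualChar.
Variable chi : lat s -> F.
Hypothesis chi_dual : is_dual_char n chi.

Lemma dual_char0 : chi 0 = 1.
Proof.
case: chi_dual => _ chiD chi_neq0.
by apply: (mulfI (chi_neq0 0)); rewrite mulr1 -chiD addr0.
Qed.

Lemma dual_charN v : chi (- v) = (chi v)^-1.
Proof.
case: chi_dual => _ chiD chi_neq0.
by rewrite -[LHS](mulKf (chi_neq0 v)) -chiD subrr dual_char0 mulr1.
Qed.

Lemma dual_charMn v m : chi (v *+ m) = chi v ^+ m.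
Proof.
case: chi_dual => _ chiD _; elim: m => [|m IH]; first by rewrite mulr0n dual_char0.
by rewrite mulrS chiD IH exprS.
Qed.

Lemma dual_charMz v z : chi (v *~ z) = chi v ^ z.
Proof.
case: z => m; first exact: dual_charMn.
by rewrite NegzE mulrNz dual_charN -invr_expz dual_charMn.
Qed.

Lemma dual_char_monomialE : chi = monomial (fun i => chi (delta_mx 0 i)).
Proof.
case: chi_dual => _ chiD _; apply: functional_extensionality => v.
rewrite {1}[v]row_sum_delta (big_morph chi chiD dual_char0) /monomial.
by apply: eq_bigr => i _; rewrite -[v 0 i]intz scaler_int dual_charMz intz.
Qed.

Lemma dual_char_basis_exp i : chi (delta_mx 0 i) ^+ n i = 1.
Proof.
case: chi_dual => chi_per _ _.
rewrite -dual_charMn -[X in chi X]add0r chi_per ?dual_char0 //.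
apply/inLnP => k; rewrite mulmxnE mxE.
have [<-|ik] := eqVneq i k; first by rewrite !eqxx mulr1n natz dvdzz.
by rewrite andbF mul0rn dvdz0.
Qed.

End DualChar.

Lemma symbol_eval_monomial (a : finfunL s F) xi :
  symbol_eval a xi = \sum_(v <- finsupp a) monomial xi (- v) * a v.
Proof.
by apply: eq_bigr => v _; rewrite mulrC; congr (_ * _); apply: eq_bigr => i _; rewrite mxE.
Qed.

Lemma V_nonempty_symbol_root t (a : 'I_t -> finfunL s F) :
  V_nonempty n a -> exists xi : 'I_s -> F,
    (forall i, xi i != 0) /\ (forall j, symbol_eval (a j) xi = 0) /\
    (forall i, xi i ^+ n i = 1).
Proof.
case=> chi [chi_dual hat0]; have [chi_per _ chi_neq0] := chi_dual.
exists (fun i => (chi (delta_mx 0 i))^-1); split; [|split].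
- by move=> i; rewrite invr_eq0.
- move=> j; rewrite symbol_eval_monomial -[RHS](hat0 j) (hatG_push n_gt0 _ chi_per).
  apply: eq_bigr => v _; rewrite mulrC; congr (_ * _).
  rewrite [in RHS](dual_char_monomialE chi_dual).
  by apply: eq_bigr => i _; rewrite mxE exprz_inv opprK.
- by move=> i /=; rewrite exprVn dual_char_basis_exp ?invr1.
Qed.

Lemma symbol_root_harmonic t (a : 'I_t -> finfunL s F) (xi : 'I_s -> F) :
  (forall i, xi i != 0) -> (forall j, symbol_eval (a j) xi = 0) ->
  (forall i, xi i ^+ n i = 1) ->
  exists f : lat s -> F, (exists v, f v != 0) /\ periodic n f /\ harmonic a f.
Proof.
move=> xi_neq0 root xi_n; exists (monomial xi); split; [|split].
- by exists 0; rewrite monomial0 oner_neq0.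
- exact: periodic_monomial.
- move=> j g; rewrite /convL.
  under eq_bigr do rewrite (monomialD xi_neq0) -mulrA.
  rewrite -big_distrr /= -[X in _ * X = 0](symbol_eval_monomial (a j) xi) root.
  exact: mulr0.
Qed.

End Characters.

Lemma expr_pred_fixed (F : fieldType) (x : F) q : (1 < q)%N -> x ^+ q = x ->
  x ^+ q.-1 = (x != 0)%:R.
Proof.
case: q => [|[|m]] // _; have [-> _|x_neq0] := eqVneq x 0; first by rewrite expr0n.
by move=> xq /=; apply: (mulfI x_neq0); rewrite mulr1 -exprS.
Qed.

Lemma ord_single t (i j : 'I_t) : t = 1%N -> i = j.
Proof. by move=> t1; apply: val_inj => /=; have := ltn_ord i; have := ltn_ord j; lia. Qed.

Section Fourier.
Variables (F : fieldType) (s : nat) (n : 'I_s -> nat).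
Hypothesis n_gt0 : forall i, (0 < n i)%N.
Variable zeta : 'I_s -> F.
Hypothesis zeta_prim : forall i, (n i).-primitive_root (zeta i).
Local Notation bv := (@boxv s n).

Lemma zeta_neq0 i : zeta i != 0.
Proof.
apply/eqP => zeta0; have := prim_expr_order (zeta_prim i).
by rewrite zeta0 expr0n gtn_eqF // => /eqP; rewrite eq_sym oner_eq0.
Qed.

Lemma zeta_expz_eq1 i z : (zeta i ^ z == 1) = ((n i)%:Z %| z)%Z.
Proof.
have n0 : (n i)%:Z != 0 by rewrite eqz_nat -lt0n n_gt0.
rewrite {1}(divz_eq z (n i)) expfzDr ?zeta_neq0 // [(_ %/ _)%Z * _]mulrC.
rewrite -exprz_exp -exprnP prim_expr_order // exp1rz mul1r.
rewrite -(gez0_abs (modz_ge0 z n0)) -exprnP -(prim_order_dvd (zeta_prim i)).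
have z_lt : (`|(z %% n i)%Z| < n i)%N.
  by rewrite -ltz_nat gez0_abs ?modz_ge0 // ltz_pmod // ltz_nat n_gt0.
apply/idP/idP => [|/dvdz_mod0P -> //].
by rewrite /dvdn modn_small // absz_eq0 => /eqP /dvdz_mod0P.
Qed.

Definition pairing (u v : lat s) : F := monomial (fun i => zeta i ^ (u ord0 i)) v.

Lemma zeta_expz_neq0 (u : lat s) i : zeta i ^ (u ord0 i) != 0.
Proof. by rewrite expfz_eq0 negb_and zeta_neq0 orbT. Qed.

Lemma zeta_expz_order (u : lat s) i : (zeta i ^ (u ord0 i)) ^+ n i = 1.
Proof. by rewrite exprnP exprzAC -exprnP prim_expr_order // exp1rz. Qed.

Lemma pairingC u v : pairing u v = pairing v u.
Proof. by apply: eq_bigr => i _; rewrite !exprz_exp mulrC. Qed.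

Lemma pairingD u v w : pairing u (v + w) = pairing u v * pairing u w.
Proof. exact/monomialD/zeta_expz_neq0. Qed.

Lemma pairing0 u : pairing u 0 = 1.
Proof. exact: monomial0. Qed.

Lemma periodic_pairing u : periodic n (pairing u).
Proof. exact: periodic_monomial (zeta_expz_neq0 u) (zeta_expz_order u). Qed.

Lemma periodic_pairing_l v : periodic n (pairing^~ v).
Proof. by move=> u x hx /=; rewrite pairingC periodic_pairing // pairingC. Qed.

Lemma dual_char_pairing u : is_dual_char n (pairing u).
Proof. exact/dual_char_monomial/zeta_expz_order/zeta_expz_neq0. Qed.

Lemma pairing_delta_mx i w : pairing (delta_mx 0 i) w = zeta i ^ (w ord0 i).
Proof.
rewrite pairingC /pairing /monomial (bigD1 i) //= big1 ?mulr1.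
  by rewrite mxE !eqxx /= exprz_exp mulr1.
by move=> k ki; rewrite mxE (negbTE ki) andbF expr0z.
Qed.

Lemma sum_pairing w : \sum_(be : boxT n) pairing (bv be) w =
  if inLn n w then (#|{: boxT n}|%:R : F) else 0.
Proof.
case: ifP => hw.
  rewrite (eq_bigr (fun _ => 1)) ?sumr_const // => be _.
  by rewrite -[w]add0r periodic_pairing // pairing0.
have [i hi] : exists i, ~~ ((n i)%:Z %| w ord0 i)%Z.
  by apply/existsP; rewrite -negb_forall; apply/negbT.
set S := \sum_(be : boxT n) _.
(* Shifting the summation by e_i multiplies S by zeta_i^(w_i), which is not 1. *)
have S_fixed : S = S * zeta i ^ (w ord0 i).
  rewrite {1}/S -(sum_box_shift n_gt0 (- delta_mx 0 i) (periodic_pairing_l w)).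
  rewrite /S big_distrl /=; apply: eq_bigr => be _.
  by rewrite opprK -pairing_delta_mx pairingC pairingD pairingC [pairing w _]pairingC.
apply/eqP; move/eqP: S_fixed; rewrite -subr_eq0 -{1}[S]mulr1 -mulrBr mulf_eq0.
by rewrite subr_eq0 [1 == _]eq_sym zeta_expz_eq1 (negbTE hi) orbF.
Qed.

Definition fourier (f : lat s -> F) (be : boxT n) : F := hatG n f (pairing (bv be)).

Lemma fourier0 (f : lat s -> F) be : (forall g, f g = 0) -> fourier f be = 0.
Proof. by move=> f0; rewrite /fourier /hatG big1 // => al _; rewrite f0 mul0r. Qed.

Lemma fourierB (f g : lat s -> F) be :
  fourier (fun x => f x - g x) be = fourier f be - fourier g be.
Proof. by rewrite /fourier /hatG -sumrB; apply: eq_bigr => al _; rewrite mulrBl. Qed.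

Lemma fourier_deltaG be : fourier (deltaG F n) be = 1.
Proof.
rewrite /fourier /hatG -(pairing0 (bv be)).
rewrite -(sum_box_inLn n_gt0 0 (periodic_pairing (bv be))).
by apply: eq_bigr => al _; rewrite /deltaG sub0r inLnN; case: ifP; rewrite ?mul1r ?mul0r.
Qed.

Lemma fourier_convG (f b : lat s -> F) be : periodic n b ->
  fourier (convG n f b) be = fourier f be * fourier b be.
Proof.
move=> hb; rewrite /fourier /hatG /convG.
under eq_bigr do rewrite big_distrl /=.
rewrite exchange_big big_distrl /=; apply: eq_bigr => ga _.
have hb_pairing := periodicM hb (periodic_pairing (bv be)).
rewrite -[X in _ = _ * X](sum_box_shift n_gt0 (bv ga) hb_pairing) big_distrr /=.
apply: eq_bigr => al _.
have -> : pairing (bv be) (bv al) = pairing (bv be) (bv ga) * pairing (bv be) (bv al - bv ga).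
  by rewrite -pairingD addrC subrK.
ring.
Qed.

Lemma fourier_iter_DeltaG k (f b : lat s -> F) be : periodic n b ->
  fourier (iter k (DeltaG n b) f) be = fourier f be * fourier b be ^+ k.
Proof.
move=> hb; elim: k => [|k IH]; first by rewrite expr0 mulr1.
by rewrite iterS /DeltaG fourier_convG // IH exprSr mulrA.
Qed.

Lemma sum_fourier_pairing (f : lat s -> F) g : periodic n f ->
  \sum_(be : boxT n) fourier f be * pairing (bv be) (- g) = #|{: boxT n}|%:R * f g.
Proof.
move=> hf; rewrite /fourier /hatG.
under eq_bigr do rewrite big_distrl /=.
rewrite exchange_big /= -(sum_box_inLn n_gt0 g (periodicM (periodic_cst _) hf)).
apply: eq_bigr => al _.
under eq_bigr do rewrite -mulrA -pairingD.
by rewrite -big_distrr /= sum_pairing inLn_subC; case: ifP; rewrite ?mulr0 // mulrC.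
Qed.

Hypothesis card_box_neq0 : (#|{: boxT n}|%:R : F) != 0.

Lemma fourier_inj (f : lat s -> F) : periodic n f ->
  (forall be, fourier f be = 0) -> forall g, f g = 0.
Proof.
move=> hf f0 g; have := sum_fourier_pairing g hf.
rewrite big1 => [/esym/eqP|be _]; last by rewrite f0 mul0r.
by rewrite mulf_eq0 (negbTE card_box_neq0) => /eqP.
Qed.

Lemma fourier_eq (f g : lat s -> F) : periodic n f -> periodic n g ->
  (forall be, fourier f be = fourier g be) -> f = g.
Proof.
move=> hf hg fg; apply: functional_extensionality => x; apply/eqP; rewrite -subr_eq0.
apply/eqP; apply: fourier_inj (periodicB hf hg) _ x => be.
by rewrite fourierB fg subrr.
Qed.

Section Harmonic.
Variables (t : nat) (a : 'I_t -> finfunL s F).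

Definition harmonicG (f : lat s -> F) := forall j g, convG n f (push n (a j)) g = 0.

Local Notation fourier_push j be := (fourier (push n (a j)) be).

Lemma harmonicG_fourier f : periodic n f ->
  harmonicG f <-> forall j be, fourier f be * fourier_push j be = 0.
Proof.
move=> hf; split=> [harm j be | f_ann j].
  by rewrite -(fourier_convG f be (periodic_push (a j))); apply: fourier0 => g; apply: harm.
apply: fourier_inj (periodic_convG _ (periodic_push _)) _ => be.
by rewrite (fourier_convG f be (periodic_push (a j))).
Qed.

Lemma fourier_root_V_nonempty :
  (exists be, forall j, fourier_push j be = 0) -> V_nonempty n a.
Proof. by case=> be root; exists (pairing (boxv be)); split; [apply: dual_char_pairing|]. Qed.

Lemma harmonic_fourier_rootP :
  (exists f, (exists v, f v != 0) /\ periodic n f /\ harmonic a f) <->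
  exists be, forall j, fourier_push j be = 0.
Proof.
split=> [[f [[v fv_neq0] [hf harm]]] | ]; last first.
  move/fourier_root_V_nonempty/(V_nonempty_symbol_root n_gt0) => [xi [xi_neq0 [root xi_n]]].
  exact: symbol_root_harmonic xi_neq0 root xi_n.
have [be fbe_neq0] : exists be, fourier f be != 0.
  apply/existsP; apply: contraTT fv_neq0 => /existsPn f0; rewrite negbK; apply/eqP.
  by apply: (fourier_inj hf) => be; apply/eqP; rewrite -[_ == 0]negbK f0.
have /harmonicG_fourier harmG : harmonicG f.
  by move=> j g; rewrite -(convL_push n_gt0) //; apply: harm.
exists be => j; apply/eqP; move: (harmG hf j be) => /eqP.
by rewrite mulf_eq0 (negbTE fbe_neq0).
Qed.

Lemma fourier_root_single j0 : t = 1%N ->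
  (exists be, forall j, fourier_push j be = 0) <-> exists be, fourier_push j0 be = 0.
Proof.
move=> t1; split=> -[be root]; exists be; first exact: root.
by move=> j; rewrite (ord_single j j0 t1).
Qed.

Variable q : nat.

Definition harmonic_gen : lat s -> F := \big[convG n / deltaG F n]_(j < t)
  (fun g => deltaG F n g - iter q.-1 (DeltaG n (push n (a j))) (deltaG F n) g).

Definition harmonic_proj : (lat s -> F) -> (lat s -> F) :=
  \big[(fun P Q => P \o Q) / id]_(j < t)
    (fun f g => f g - iter q.-1 (DeltaG n (push n (a j))) f g).

Definition V_indicator (be : boxT n) : F := \prod_(j < t) (1 - fourier_push j be ^+ q.-1).

Lemma fourier_harmonic_gen be : fourier harmonic_gen be = V_indicator be.
Proof.
(* [fourier_convG] needs the accumulated right factor to be periodic. *)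
pose P x g := periodic n g /\ fourier g be = x.
suff [] : P (V_indicator be) harmonic_gen by [].
apply: big_rec2 => [|j x g _ [hg <-]].
  by split; [apply: periodic_deltaG | apply: fourier_deltaG].
have hb := periodic_push (a j).
split; first exact: periodic_convG.
by rewrite fourier_convG // fourierB fourier_iter_DeltaG // fourier_deltaG mul1r.
Qed.

Lemma periodic_harmonic_proj f : periodic n f -> periodic n (harmonic_proj f).
Proof.
rewrite /harmonic_proj; elim/big_rec: _ => [|j P _ hP] //= hf.
by apply: periodicB (hP hf) _; exact: periodic_iter_DeltaG _ (periodic_push _) (hP hf).
Qed.

Lemma fourier_harmonic_proj f be :
  fourier (harmonic_proj f) be = V_indicator be * fourier f be.
Proof.
rewrite /harmonic_proj /V_indicator; elim/big_rec2: _ => [|j x P _ IH] /=.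
  by rewrite mul1r.
by rewrite fourierB (fourier_iter_DeltaG _ _ _ (periodic_push _)) IH; ring.
Qed.

Hypothesis q_gt1 : (1 < q)%N.
Hypothesis frobenius : forall j be, fourier_push j be ^+ q = fourier_push j be.

Lemma V_indicatorE be : V_indicator be = [forall j, fourier_push j be == 0]%:R.
Proof.
rewrite /V_indicator.
under eq_bigr => j _ do rewrite (expr_pred_fixed q_gt1 (frobenius j be)).
case: (boolP [forall j, _]) => [/forallP root | /forallPn [j hj]].
  by rewrite big1 // => j _; rewrite (eqP (root j)) eqxx subr0.
by rewrite (bigD1 j) //= hj subrr mul0r.
Qed.

Lemma V_indicator_idem be : V_indicator be * V_indicator be = V_indicator be.
Proof. by rewrite V_indicatorE; case: forallP => _; rewrite ?mulr1 ?mulr0. Qed.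

Lemma harmonicG_V_indicator f : periodic n f ->
  harmonicG f <-> forall be, V_indicator be * fourier f be = fourier f be.
Proof.
move=> hf; rewrite harmonicG_fourier //; split => [f_ann be | fixed j be].
  rewrite V_indicatorE; case: (boolP [forall j, _]) => [_|/forallPn [j hj]]; first exact: mul1r.
  by move/eqP: (f_ann j be); rewrite mulf_eq0 (negbTE hj) orbF => /eqP ->; rewrite mulr0.
move: (fixed be); rewrite V_indicatorE; case: forallP => [root _|_ <-].
  by rewrite (eqP (root j)) mulr0.
by rewrite !mul0r.
Qed.

Lemma harmonicG_principal_ideal f : periodic n f /\ harmonicG f <->
  exists c, periodic n c /\ f = convG n harmonic_gen c.
Proof.
split=> [[hf harm] | [c [hc ->]]].
  exists f; split => //; apply: fourier_eq (periodic_convG _ hf) _ => // be.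
  by rewrite fourier_convG // fourier_harmonic_gen ((harmonicG_V_indicator hf).1 harm).
have hgc := periodic_convG harmonic_gen hc.
split=> //; apply/harmonicG_V_indicator => // be.
by rewrite fourier_convG // fourier_harmonic_gen mulrA V_indicator_idem.
Qed.

Lemma orth_proj_harmonic_proj : orth_proj n harmonicG harmonic_proj.
Proof.
split.
- move=> f hf; have hPf := periodic_harmonic_proj hf; split => //.
  by apply/harmonicG_V_indicator => // be; rewrite fourier_harmonic_proj mulrA V_indicator_idem.
- move=> w hw harm; apply: (fourier_eq (periodic_harmonic_proj hw) hw) => be.
  by rewrite fourier_harmonic_proj ((harmonicG_V_indicator hw).1 harm).
- move=> f w hf hw harm.
  have conv0 : forall g, convG n (fun g => f g - harmonic_proj f g) w g = 0.
    apply: (fourier_inj (periodic_convG _ hw)) => be.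
    rewrite fourier_convG // fourierB fourier_harmonic_proj -((harmonicG_V_indicator hw).1 harm).
    set x := fourier f be; set y := fourier w be; set e := V_indicator be.
    have -> : (x - e * x) * (e * y) = (e - e * e) * (x * y) by ring.
    by rewrite /e V_indicator_idem subrr mul0r.
  rewrite /ipG (_ : \sum_(al : boxT n) _ = convG n (fun g => f g - harmonic_proj f g) w 0).
    by rewrite conv0 mulr0.
  by apply: eq_bigr => al _; rewrite sub0r.
Qed.

End Harmonic.

Section ConvolutionPowers.
Variables (b : lat s -> F) (q : nat).
Hypothesis b_per : periodic n b.

Lemma iter_DeltaG_deltaG_neq be k : fourier b be = 0 -> (0 < k)%N ->
  iter k (DeltaG n b) (deltaG F n) <> deltaG F n.
Proof.
move=> b0 k_gt0 /(congr1 (fourier^~ be)).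
rewrite fourier_iter_DeltaG // fourier_deltaG b0 expr0n gtn_eqF // mul1r.
by move/eqP; rewrite eq_sym oner_eq0.
Qed.

Lemma no_fourier_root : ~ (exists be, fourier b be = 0) -> forall be, fourier b be != 0.
Proof. by move=> none be; apply/eqP => b0; apply: none; exists be. Qed.

Hypothesis q_gt1 : (1 < q)%N.
Hypothesis frobenius : forall be, fourier b be ^+ q = fourier b be.
Local Notation D := (DeltaG n b).

Let q_pred_gt0 : (0 < q.-1)%N. Proof. by rewrite ltn_predRL. Qed.

Lemma iter_pred_DeltaG_id f : (forall be, fourier b be != 0) -> periodic n f ->
  iter q.-1 D f = f.
Proof.
move=> b_neq0 hf; apply: (fourier_eq (periodic_iter_DeltaG q.-1 b_per hf) hf) => be.
by rewrite fourier_iter_DeltaG // expr_pred_fixed // b_neq0 mulr1.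
Qed.

Lemma fourier_root_iter_pred_deltaG : (exists be, fourier b be = 0) <->
  exists g, iter q.-1 D (deltaG F n) g != deltaG F n g.
Proof.
split=> [[be b0] | [g hg]]; last first.
  apply: NNPP => /no_fourier_root b_neq0; move: hg.
  by rewrite iter_pred_DeltaG_id ?eqxx //; apply: periodic_deltaG.
apply: NNPP => none; apply: (iter_DeltaG_deltaG_neq b0 q_pred_gt0).
apply: functional_extensionality => g; apply/eqP/negPn/negP => hg.
by apply: none; exists g.
Qed.

Lemma fourier_root_iter_pred : (exists be, fourier b be = 0) <->
  exists f, periodic n f /\ exists g, iter q.-1 D f g != f g.
Proof.
split=> [root | [f [hf [g hg]]]].
  by exists (deltaG F n); split; [apply: periodic_deltaG | apply/fourier_root_iter_pred_deltaG].
apply: NNPP => /no_fourier_root b_neq0.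
by move: hg; rewrite iter_pred_DeltaG_id ?eqxx.
Qed.

Lemma fourier_root_aperiodic : (exists be, fourier b be = 0) <->
  ~ exists P, (0 < P)%N /\ forall k, iter (k + P) D (deltaG F n) = iter k D (deltaG F n).
Proof.
split=> [[be b0] [P [P_gt0 per]] | aper].
  by apply: (iter_DeltaG_deltaG_neq b0 P_gt0); have := per 0%N; rewrite add0n.
apply: NNPP => /no_fourier_root b_neq0; apply: aper; exists q.-1.
split=> // k.
by rewrite iterD iter_pred_DeltaG_id //; apply: periodic_deltaG.
Qed.

End ConvolutionPowers.

End Fourier.

Lemma closed_field_prim_root_exists (F : closedFieldType) m :
  (0 < m)%N -> m%:R != 0 :> F -> exists z : F, m.-primitive_root z.
Proof.
move=> m_gt0 m_neq0; have [rs Drs] := closed_field_poly_normal ('X^m - 1 : {poly F}).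
rewrite (monicP (monicXnsubC 1 m_gt0)) scale1r in Drs.
have rs_uniq : uniq rs by rewrite -separable_prod_XsubC -Drs separable_Xn_sub_1.
have rs_size : size rs = m.
  by have := size_XnsubC (1 : F) m_gt0; rewrite Drs size_prod_XsubC => -[].
have rs_roots : all m.-unity_root rs.
  by apply/allP => x x_rs; rewrite /root_of_unity Drs root_prod_XsubC.
have := has_prim_root m_gt0 rs_roots rs_uniq; rewrite rs_size leqnn => /(_ isT) /hasP [z _ hz].
by exists z.
Qed.

Lemma closed_field_prim_roots (F : closedFieldType) s (n : 'I_s -> nat) p :
  prime p -> p \in [pchar F] -> (forall i, (0 < n i)%N /\ coprime (n i) p) ->
  exists zeta : 'I_s -> F, forall i, (n i).-primitive_root (zeta i).
Proof.
move=> p_pr pF n_ok.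
have n_neq0 i : (n i)%:R != 0 :> F.
  by rewrite -(dvdn_pcharf pF) -prime_coprime // coprime_sym (n_ok i).2.
have root i := closed_field_prim_root_exists (n_ok i).1 (n_neq0 i).
by exists (fun i => xchoose (root i)) => i; apply: xchooseP.
Qed.

Unset Implicit Arguments.

Theorem theorem3p2
  (p : nat) (F : closedFieldType)
  (Hp : prime p) (HcharF : p \in [pchar F])
  (Halg : forall x : F, exists k : nat, (0 < k)%N /\ x ^+ (p ^ k) = x)
  (s t : nat) (a : 'I_t -> finfunL s F) (n : 'I_s -> nat)
  (Hn : forall i, (0 < n i)%N /\ coprime (n i) p)
  (r0 : nat)
  (Hr0 : (0 < r0)%N /\
         forall j chi, is_dual_char n chi ->
           hatG n (push n (a j)) chi ^+ (p ^ r0) = hatG n (push n (a j)) chi)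
  (Hr0min : forall r, (0 < r)%N ->
         (forall j chi, is_dual_char n chi ->
           hatG n (push n (a j)) chi ^+ (p ^ r) = hatG n (push n (a j)) chi) ->
         (r0 <= r)%N) :
  let q0 := (p ^ r0)%N in
  let Cond_i := exists f : lat s -> F,
      (exists v, f v != 0) /\ periodic n f /\ harmonic a f in
  let Cond_ii := V_nonempty n a in
  let Cond_iii := exists xi : 'I_s -> F,
      (forall i, xi i != 0) /\ (forall j, symbol_eval (a j) xi = 0) /\
      (forall i, xi i ^+ n i = 1) in
  let kerA := fun f : lat s -> F =>
      forall j g, convG n f (push n (a j)) g = 0 in
  let gen := \big[convG n / deltaG F n]_(j < t)
      (fun g => deltaG F n g
         - iter q0.-1 (DeltaG n (push n (a j))) (deltaG F n) g) in
  let Pop := \big[(fun P Q => P \o Q) / id]_(j < t)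
      (fun f g => f g - iter q0.-1 (DeltaG n (push n (a j))) f g) in
  (* (a) *)
  ((Cond_i <-> Cond_ii) /\ (Cond_ii <-> Cond_iii)) /\
  (* (b) *)
  ((forall f, (periodic n f /\ kerA f) <->
              (exists c, periodic n c /\ f = convG n gen c)) /\
   orth_proj n kerA Pop) /\
  (* (c) *)
  (forall j0 : 'I_t, t = 1%N ->
     let D := DeltaG n (push n (a j0)) in
     let Cond_iv := exists g, iter q0.-1 D (deltaG F n) g != deltaG F n g in
     let Cond_iv' := exists f, periodic n f /\
                       exists g, iter q0.-1 D f g != f g in
     let Cond_v := ~ exists P, (0 < P)%N /\
                       forall k, iter (k + P) D (deltaG F n) = iter k D (deltaG F n) in
     (Cond_i <-> Cond_iv) /\ (Cond_iv <-> Cond_iv') /\ (Cond_i <-> Cond_v)).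
Proof.
move=> q0 Cond_i Cond_ii Cond_iii kerA gen Pop.
have [r0_gt0 frobenius] := Hr0.
have n_gt0 i : (0 < n i)%N := (Hn i).1.
have [zeta zeta_prim] := closed_field_prim_roots Hp HcharF Hn.
have card_neq0 := card_box_neq0 Hp HcharF (fun i => (Hn i).2).
have q0_gt1 : (1 < q0)%N by rewrite /q0 -{1}(expn0 p) ltn_exp2l ?prime_gt1.
have frob j (be : boxT n) :
    fourier zeta (push n (a j)) be ^+ q0 = fourier zeta (push n (a j)) be.
  exact: frobenius j _ (dual_char_pairing n_gt0 zeta_prim _).
have i_root := harmonic_fourier_rootP n_gt0 zeta_prim card_neq0 a.
have ii_iii : Cond_ii -> Cond_iii by apply: V_nonempty_symbol_root.
have iii_i : Cond_iii -> Cond_i by case=> xi [? []]; apply: symbol_root_harmonic.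
have i_ii : Cond_i -> Cond_ii by move/i_root/(fourier_root_V_nonempty n_gt0 zeta_prim).
split; [by split; split; auto | split].
  split; [exact: harmonicG_principal_ideal | exact: orth_proj_harmonic_proj].
move=> j0 t1 D Cond_iv Cond_iv' Cond_v.
have hb : periodic n (push n (a j0)) := periodic_push _.
have i_root_j0 := iff_trans i_root (fourier_root_single n zeta a j0 t1).
have roots_j0 := fourier_root_iter_pred_deltaG n_gt0 zeta_prim card_neq0 hb q0_gt1 (frob j0).
split; first exact: iff_trans i_root_j0 roots_j0.
split; first apply: iff_trans (iff_sym roots_j0) _.
  exact: (fourier_root_iter_pred n_gt0 zeta_prim card_neq0 hb q0_gt1 (frob j0)).
apply: iff_trans i_root_j0 _.
exact: (fourier_root_aperiodic n_gt0 zeta_prim card_neq0 hb q0_gt1 (frob j0)).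
Qed.
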